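(* Consider the one-step-ahead prediction problem described in the context, with nonrandomized decisions $\delta=(\delta_0,\delta_1)\in\mathcal D=[0,1]^2$ and the Kullback–Leibler risk $R_\delta(\theta)$. Let $\mathcal C_{<}=\{(\delta_0,\delta_1):0<\delta_0<\delta_1<1\}$, $\mathcal C_{=}=\{(\delta_0,\delta_1):0<\delta_0=\delta_1<1\}$, $\mathcal M=\{(0,1)\}$. Then the class $\mathcal A=\mathcal C_{<}\cup\mathcal C_{=}\cup\mathcal M$ is the minimal complete class within $\mathcal D$. In particular, $\mathcal A$ is exactly the set of admissible decisions in $\mathcal D$.
   Context: Bernoulli model: for $\theta\in[0,1]$, $p_\theta(x)=\theta^x(1-\theta)^{1-x}$, $x\in\{0,1\}$. One observes $x\sim p_\theta$ and predicts an independent future $y\sim p_\theta$. A nonrandomized decision is a pair $\delta=(\delta_0,\delta_1)\in\mathcal D=[0,1]^2$, used as the predictive distribution $p_\delta(y\mid x)=\delta_x^{\,y}(1-\delta_x)^{1-y}$. The loss is the Kullback–Leibler divergence $L(\theta,\delta_x)=\theta\log\frac{\theta}{\delta_x}+(1-\theta)\log\frac{1-\theta}{1-\delta_x}$, with the conventions $0\log(0/q)=0$ for every $q\in[0,1]$, $c\log(c/0)=+\infty$ for $c>0$, and $0\cdot(+\infty)=0$. The risk is $R_\delta(\theta)=(1-\theta)L(\theta,\delta_0)+\theta L(\theta,\delta_1)\in[0,+\infty]$, equivalently $R_\delta(\theta)=-S(\theta)+\theta^2\log\frac1{\delta_1}+\theta(1-\theta)\log\frac1{1-\delta_1}+\theta(1-\theta)\log\frac1{\delta_0}+(1-\theta)^2\log\frac1{1-\delta_0}$,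 where $S(\theta)=-\theta\log\theta-(1-\theta)\log(1-\theta)$ is the binary entropy. A decision $\delta'$ dominates $\delta$ if $R_{\delta'}(\theta)\le R_\delta(\theta)$ for all $\theta\in[0,1]$ with strict inequality for some $\theta$. A decision is admissible if no decision in $\mathcal D$ dominates it. A class $\mathcal C\subseteq\mathcal D$ is complete if every $\delta\in\mathcal D\setminus\mathcal C$ is dominated by some element of $\mathcal C$; it is minimal complete if it is complete and no proper subset of it is complete. *)

From Stdlib Require Import Reals.
Open Scope R_scope.

Inductive ER : Type := Fin (r : R) | PInf.

Definition er_add (x y : ER) : ER :=
  match x, y with
  | Fin a, Fin b => Fin (a + b)
  | _, _ => PInf
  end.

(* multiplication by a nonnegative real c, with 0 * (+oo) = 0 *)
Definition er_scale (c : R) (x : ER) : ER :=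
  match x with
  | Fin a => Fin (c * a)
  | PInf => if Req_EM_T c 0 then Fin 0 else PInf
  end.

Definition er_le (x y : ER) : Prop :=
  match x, y with
  | Fin a, Fin b => a <= b
  | _, PInf => True
  | PInf, Fin _ => False
  end.

Definition er_lt (x y : ER) : Prop := er_le x y /\ x <> y.

(* c log (c/d) with conventions 0 log(0/q) = 0 and c log(c/0) = +oo for c>0 *)
Definition xlogxy (c d : R) : ER :=
  if Req_EM_T c 0 then Fin 0
  else if Req_EM_T d 0 then PInf
  else Fin (c * ln (c / d)).

Definition KL (theta q : R) : ER :=
  er_add (xlogxy theta q) (xlogxy (1 - theta) (1 - q)).

Definition decision := (R * R)%type.

Definition InD (d : decision) : Prop :=
  0 <= fst d <= 1 /\ 0 <= snd d <= 1.

Definition risk (d : decision) (theta : R) : ER :=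
  er_add (er_scale (1 - theta) (KL theta (fst d)))
         (er_scale theta (KL theta (snd d))).

Definition dominates (d' d : decision) : Prop :=
  (forall theta, 0 <= theta <= 1 -> er_le (risk d' theta) (risk d theta)) /\
  (exists theta, 0 <= theta <= 1 /\ er_lt (risk d' theta) (risk d theta)).

Definition admissible (d : decision) : Prop :=
  InD d /\ ~ (exists d', InD d' /\ dominates d' d).

Definition complete (C : decision -> Prop) : Prop :=
  (forall d, C d -> InD d) /\
  (forall d, InD d -> ~ C d -> exists d', C d' /\ dominates d' d).

Definition minimal_complete (C : decision -> Prop) : Prop :=
  complete C /\
  (forall C' : decision -> Prop,
      (forall d, C' d -> C d) -> (exists d, C d /\ ~ C' d) -> ~ complete C').

Definition C_lt (d : decision) : Prop := 0 < fst d < snd d /\ snd d < 1.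
Definition C_eq (d : decision) : Prop := 0 < fst d /\ fst d = snd d /\ snd d < 1.
Definition M_cls (d : decision) : Prop := d = (0, 1).

Definition A_cls (d : decision) : Prop := C_lt d \/ C_eq d \/ M_cls d.

From Stdlib Require Import Reals Lra Psatz Classical.
Open Scope R_scope.

(* On the open square every risk is the negative entropy plus a weighted sum of
   the logarithms of [1/delta]; two interior decisions are compared through these
   weighted sums. At [theta = 1] and [theta = a] the risk gap between a competitor
   and [(a, b)] with [a <= b] combines into a positive mix of two Kullback-Leibler
   divergences (Gibbs' inequality), so nothing dominates [(a, b)]. A decision
   [(x, y)] with [y < x] is beaten by the diagonal point [(c, c)],
   [c = x / (1 + x - y)], because the risk gap is bounded below by
   [(x - y) (t - c)^2 / (c (1 - c))] via [ln z <= z - 1]. Every boundary decision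
   has infinite risk inside [(0,1)] and is beaten by [(0, 1)], whose risk is [0]
   at both endpoints. A complete class of admissible decisions is then minimal
   complete and equals the set of admissible decisions. *)

Lemma sub_lt_mul_ln_ratio p q : 0 < p -> 0 < q -> p <> q -> p - q < p * (ln p - ln q).
Proof.
  intros Hp Hq Hpq.
  assert (Hne : ln q - ln p <> 0).
  { intro E. apply Hpq, ln_inv; lra. }
  pose proof (exp_ineq1 _ Hne) as H.
  unfold Rminus in H. rewrite exp_plus, exp_Ropp, !exp_ln in H by lra.
  apply (Rmult_lt_compat_l p) in H; [|lra].
  replace (p * (q * / p)) with q in H by (field; lra). lra.
Qed.

Lemma sub_le_mul_ln_ratio p q : 0 < p -> 0 < q -> p - q <= p * (ln p - ln q).
Proof.
  intros Hp Hq. destruct (Req_dec p q) as [<- | Hpq].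
  - replace (ln p - ln p) with 0 by ring. lra.
  - apply Rlt_le, sub_lt_mul_ln_ratio; assumption.
Qed.

Definition kl_bin (p q : R) : R :=
  p * (ln p - ln q) + (1 - p) * (ln (1 - p) - ln (1 - q)).

Lemma kl_bin_nonneg p q : 0 < p < 1 -> 0 < q < 1 -> 0 <= kl_bin p q.
Proof.
  intros Hp Hq. unfold kl_bin.
  pose proof (sub_le_mul_ln_ratio p q ltac:(lra) ltac:(lra)).
  pose proof (sub_le_mul_ln_ratio (1 - p) (1 - q) ltac:(lra) ltac:(lra)). lra.
Qed.

Lemma kl_bin_pos p q : 0 < p < 1 -> 0 < q < 1 -> p <> q -> 0 < kl_bin p q.
Proof.
  intros Hp Hq Hpq. unfold kl_bin.
  pose proof (sub_lt_mul_ln_ratio p q ltac:(lra) ltac:(lra) Hpq).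
  pose proof (sub_le_mul_ln_ratio (1 - p) (1 - q) ltac:(lra) ltac:(lra)). lra.
Qed.

Lemma ln_lt_0 u : 0 < u < 1 -> ln u < 0.
Proof. intro Hu. rewrite <- ln_1. apply ln_increasing; lra. Qed.

Lemma er_add_0_l x : er_add (Fin 0) x = x.
Proof. destruct x; simpl; [f_equal; ring | reflexivity]. Qed.

Lemma er_add_0_r x : er_add x (Fin 0) = x.
Proof. destruct x; simpl; [f_equal; ring | reflexivity]. Qed.

Lemma er_add_pinf_l x : er_add PInf x = PInf.
Proof. destruct x; reflexivity. Qed.

Lemma er_add_pinf_r x : er_add x PInf = PInf.
Proof. destruct x; reflexivity. Qed.

Lemma er_scale_0 x : er_scale 0 x = Fin 0.
Proof. destruct x; simpl; [f_equal; ring | destruct Req_EM_T; [reflexivity | lra]]. Qed.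

Lemma er_scale_1 x : er_scale 1 x = x.
Proof. destruct x; simpl; [f_equal; ring | destruct Req_EM_T; [lra | reflexivity]]. Qed.

Lemma er_scale_pinf c : c <> 0 -> er_scale c PInf = PInf.
Proof. intro Hc. simpl. destruct Req_EM_T; [contradiction | reflexivity]. Qed.

Lemma er_lt_fin r s : r < s -> er_lt (Fin r) (Fin s).
Proof. intro H. split; simpl; [lra | intro E; injection E; lra]. Qed.

Lemma er_lt_pinf r : er_lt (Fin r) PInf.
Proof. split; simpl; [exact I | discriminate]. Qed.

Lemma er_lt_not_le x y : er_lt x y -> ~ er_le y x.
Proof.
  intros [Hle Hne]. destruct x as [a|], y as [b|]; simpl in *; try tauto.
  intro. apply Hne. f_equal. lra.
Qed.

Lemma dominates_irrefl d : ~ dominates d d.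
Proof. intros [_ [t [_ [_ H]]]]. exact (H eq_refl). Qed.

Definition xlnx (c : R) : R := if Req_EM_T c 0 then 0 else c * ln c.

Definition neg_entropy (t : R) : R := xlnx t + xlnx (1 - t).

Definition cross_risk (t a b : R) : R :=
  t * (1 - t) * - ln a + (1 - t) * (1 - t) * - ln (1 - a)
  + t * t * - ln b + t * (1 - t) * - ln (1 - b).

Lemma xlogxy_pos c d : 0 <= c -> 0 < d -> xlogxy c d = Fin (xlnx c - c * ln d).
Proof.
  intros Hc Hd. unfold xlogxy, xlnx. destruct Req_EM_T as [-> | Hc0].
  - f_equal. ring.
  - destruct Req_EM_T; [lra |]. f_equal.
    unfold Rdiv. rewrite ln_mult, ln_Rinv; try apply Rinv_0_lt_compat; lra.
Qed.

Lemma xlnx_1 : xlnx 1 = 0.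
Proof. unfold xlnx. destruct Req_EM_T; [lra |]. rewrite ln_1. ring. Qed.

Lemma KL_interior t q : 0 <= t <= 1 -> 0 < q < 1 ->
  KL t q = Fin (neg_entropy t - t * ln q - (1 - t) * ln (1 - q)).
Proof.
  intros Ht Hq. unfold KL. rewrite !xlogxy_pos by lra. simpl.
  f_equal. unfold neg_entropy. ring.
Qed.

Lemma KL_boundary t q : 0 < t < 1 -> q = 0 \/ q = 1 -> KL t q = PInf.
Proof.
  intros Ht [-> | ->]; unfold KL, xlogxy;
    repeat destruct Req_EM_T; simpl; solve [reflexivity | lra].
Qed.

Lemma KL_0 q : q < 1 -> KL 0 q = Fin (- ln (1 - q)).
Proof.
  intro Hq. unfold KL. replace (1 - 0) with 1 by ring.
  rewrite (xlogxy_pos 1), xlnx_1 by lra. unfold xlogxy.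
  destruct Req_EM_T; [simpl; f_equal; ring | lra].
Qed.

Lemma KL_0_0 : KL 0 0 = Fin 0.
Proof. rewrite KL_0 by lra. replace (1 - 0) with 1 by ring. rewrite ln_1. f_equal. ring. Qed.

Lemma KL_0_pos q : 0 < q <= 1 -> er_lt (Fin 0) (KL 0 q).
Proof.
  intro Hq. destruct (Req_dec q 1) as [-> | Hq1].
  - replace (KL 0 1) with PInf; [apply er_lt_pinf |].
    unfold KL, xlogxy. repeat destruct Req_EM_T; solve [reflexivity | lra].
  - rewrite KL_0 by lra. apply er_lt_fin.
    pose proof (ln_lt_0 (1 - q)). lra.
Qed.

Lemma KL_1 q : 0 < q -> KL 1 q = Fin (- ln q).
Proof.
  intro Hq. unfold KL. replace (1 - 1) with 0 by ring.
  rewrite xlogxy_pos, xlnx_1 by lra. unfold xlogxy.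
  destruct Req_EM_T; [simpl; f_equal; ring | lra].
Qed.

Lemma KL_1_1 : KL 1 1 = Fin 0.
Proof. rewrite KL_1 by lra. rewrite ln_1. f_equal. ring. Qed.

Lemma KL_1_pos q : 0 <= q < 1 -> er_lt (Fin 0) (KL 1 q).
Proof.
  intro Hq. destruct (Req_dec q 0) as [-> | Hq0].
  - replace (KL 1 0) with PInf; [apply er_lt_pinf |].
    unfold KL, xlogxy. repeat destruct Req_EM_T; solve [reflexivity | lra].
  - rewrite KL_1 by lra. apply er_lt_fin.
    pose proof (ln_lt_0 q). lra.
Qed.

Lemma risk_at_0 d : risk d 0 = KL 0 (fst d).
Proof.
  unfold risk. replace (1 - 0) with 1 by ring.
  rewrite er_scale_1, er_scale_0. apply er_add_0_r.
Qed.

Lemma risk_at_1 d : risk d 1 = KL 1 (snd d).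
Proof.
  unfold risk. replace (1 - 1) with 0 by ring.
  rewrite er_scale_1, er_scale_0. apply er_add_0_l.
Qed.

Lemma risk_interior a b t : 0 < a < 1 -> 0 < b < 1 -> 0 <= t <= 1 ->
  risk (a, b) t = Fin (neg_entropy t + cross_risk t a b).
Proof.
  intros Ha Hb Ht. unfold risk. simpl fst; simpl snd.
  rewrite !KL_interior by lra. simpl. f_equal. unfold cross_risk. ring.
Qed.

Lemma risk_boundary x y t : 0 < t < 1 -> (x = 0 \/ x = 1 \/ y = 0 \/ y = 1) ->
  risk (x, y) t = PInf.
Proof.
  intros Ht Hxy. unfold risk. simpl fst; simpl snd.
  destruct Hxy as [Hx | [Hx | Hy]].
  - rewrite (KL_boundary t x), er_scale_pinf by lra. apply er_add_pinf_l.
  - rewrite (KL_boundary t x), er_scale_pinf by lra. apply er_add_pinf_l.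
  - rewrite (KL_boundary t y), er_scale_pinf by lra. apply er_add_pinf_r.
Qed.

Lemma interior_of_finite_risk x y t r : InD (x, y) -> 0 < t < 1 ->
  er_le (risk (x, y) t) (Fin r) -> 0 < x < 1 /\ 0 < y < 1.
Proof.
  unfold InD. simpl. intros Hxy Ht Hle.
  destruct (Req_dec x 0), (Req_dec x 1), (Req_dec y 0), (Req_dec y 1); try lra;
    rewrite risk_boundary in Hle by tauto; contradiction.
Qed.

(* [(1 - b)] times the risk gap at [theta = a] equals
   [(1-a)(1-b) KL(a|x) + a(1-a) KL(b|y) + a(b-a)(ln y - ln b)]. *)
Lemma cross_risk_minimizer a b x y : 0 < a <= b -> b < 1 -> 0 < x < 1 -> 0 < y < 1 ->
  cross_risk 1 x y <= cross_risk 1 a b -> cross_risk a x y <= cross_risk a a b ->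
  x = a /\ y = b.
Proof.
  intros Ha Hb Hx Hy H1 Hat. unfold cross_risk in H1, Hat.
  assert (Hlog : ln b <= ln y) by lra.
  assert (Hu : 0 <= a * (b - a) * (ln y - ln b)) by (apply Rmult_le_pos; nra).
  assert (Hgap : (1 - a) * (1 - b) * kl_bin a x + a * (1 - a) * kl_bin b y
                 + a * (b - a) * (ln y - ln b) <= 0).
  { unfold kl_bin. nra. }
  assert (Hab : 0 < (1 - a) * (1 - b)) by nra.
  assert (Haa : 0 < a * (1 - a)) by nra.
  pose proof (kl_bin_nonneg a x ltac:(lra) Hx).
  pose proof (kl_bin_nonneg b y ltac:(lra) Hy).
  split.
  - destruct (Req_dec x a) as [| Hxa]; [assumption | exfalso].
    pose proof (kl_bin_pos a x ltac:(lra) Hx (not_eq_sym Hxa)). nra.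
  - destruct (Req_dec y b) as [| Hyb]; [assumption | exfalso].
    pose proof (kl_bin_pos b y ltac:(lra) Hy (not_eq_sym Hyb)). nra.
Qed.

Lemma admissible_interior a b : 0 < a <= b -> b < 1 -> admissible (a, b).
Proof.
  intros Ha Hb. split; [unfold InD; simpl; lra |].
  intros [[x y] [HD Hdom]]. apply (dominates_irrefl (a, b)).
  pose proof Hdom as [Hle _].
  pose proof (Hle 1 ltac:(lra)) as H1. pose proof (Hle a ltac:(lra)) as H2.
  rewrite (risk_interior a b) in H1, H2 by lra.
  destruct (interior_of_finite_risk x y a _ HD ltac:(lra) H2) as [Hx Hy].
  rewrite (risk_interior x y) in H1, H2 by lra. simpl in H1, H2.
  destruct (cross_risk_minimizer a b x y) as [-> ->]; try lra.
  exact Hdom.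
Qed.

Lemma admissible_M : admissible (0, 1).
Proof.
  split; [unfold InD; simpl; lra |].
  intros [[x y] [HD Hdom]]. apply (dominates_irrefl (0, 1)).
  unfold InD in HD. simpl in HD.
  pose proof Hdom as [Hle _].
  pose proof (Hle 0 ltac:(lra)) as H0. pose proof (Hle 1 ltac:(lra)) as H1.
  rewrite !risk_at_0 in H0. rewrite !risk_at_1 in H1. simpl in H0, H1.
  rewrite KL_0_0 in H0. rewrite KL_1_1 in H1.
  assert (Hx : x = 0).
  { destruct (Req_dec x 0); [assumption | exfalso].
    exact (er_lt_not_le _ _ (KL_0_pos x ltac:(lra)) H0). }
  assert (Hy : y = 1).
  { destruct (Req_dec y 1); [assumption | exfalso].
    exact (er_lt_not_le _ _ (KL_1_pos y ltac:(lra)) H1). }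
  subst. exact Hdom.
Qed.

Lemma A_cls_admissible d : A_cls d -> admissible d.
Proof.
  destruct d as [a b]. unfold A_cls, C_lt, C_eq, M_cls. simpl.
  intros [H | [H | ->]].
  - apply admissible_interior; lra.
  - apply admissible_interior; lra.
  - exact admissible_M.
Qed.

(* The diagonal point [c] with [(1 + x - y) c = x] is where the first-order
   terms of the risk gap collapse to [(x - y) (t - c)^2]. *)
Lemma cross_risk_diagonal_le x y c t : 0 < y < x -> x < 1 -> (1 + x - y) * c = x ->
  0 <= t <= 1 -> cross_risk t c c <= cross_risk t x y.
Proof.
  intros Hy Hx Hc Ht.
  assert (Hc0 : 0 < c < x) by nra.
  pose proof (sub_le_mul_ln_ratio c x ltac:(lra) ltac:(lra)) as K1.
  pose proof (sub_le_mul_ln_ratio c y ltac:(lra) ltac:(lra)) as K2.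
  pose proof (sub_le_mul_ln_ratio (1 - c) (1 - x) ltac:(lra) ltac:(lra)) as K3.
  pose proof (sub_le_mul_ln_ratio (1 - c) (1 - y) ltac:(lra) ltac:(lra)) as K4.
  assert (Hsq : 0 <= (x - y) * ((t - c) * (t - c))) by (apply Rmult_le_pos; [lra | apply Rle_0_sqr]).
  assert (Hw : 0 <= t * (1 - t)) by nra.
  assert (Hgap : (x - y) * ((t - c) * (t - c)) <=
    c * (1 - c) * (cross_risk t x y - cross_risk t c c)).
  { unfold cross_risk.
    assert (He : c - x + c * (x - y) = 0) by lra.
    assert (Lin : t * (1 - t) * (1 - c) * (c - x) + t * t * (1 - c) * (c - y)
      + (1 - t) * (1 - t) * c * ((1 - c) - (1 - x))
      + t * (1 - t) * c * ((1 - c) - (1 - y)) = (x - y) * ((t - c) * (t - c))).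
    { transitivity ((x - y) * ((t - c) * (t - c)) + (t - c) * (c - x + c * (x - y)));
        [ring | rewrite He; ring]. }
    rewrite <- Lin.
    assert (W1 : 0 <= t * (1 - t) * (1 - c)) by (apply Rmult_le_pos; lra).
    assert (W2 : 0 <= t * t * (1 - c)) by (apply Rmult_le_pos; nra).
    assert (W3 : 0 <= (1 - t) * (1 - t) * c) by (apply Rmult_le_pos; nra).
    assert (W4 : 0 <= t * (1 - t) * c) by (apply Rmult_le_pos; lra).
    pose proof (Rmult_le_compat_l _ _ _ W1 K1).
    pose proof (Rmult_le_compat_l _ _ _ W2 K2).
    pose proof (Rmult_le_compat_l _ _ _ W3 K3).
    pose proof (Rmult_le_compat_l _ _ _ W4 K4).
    lra. }
  assert (Hcc : 0 < c * (1 - c)) by nra.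
  nra.
Qed.

Lemma diagonal_dominates x y c : 0 < y < x -> x < 1 -> (1 + x - y) * c = x ->
  dominates (c, c) (x, y).
Proof.
  intros Hy Hx Hc.
  assert (Hc0 : 0 < c < x) by nra.
  split.
  - intros t Ht. rewrite !risk_interior by lra. simpl.
    pose proof (cross_risk_diagonal_le x y c t Hy Hx Hc Ht). lra.
  - exists 0. split; [lra |]. rewrite !risk_interior by lra. apply er_lt_fin.
    unfold cross_risk.
    assert (ln (1 - x) < ln (1 - c)) by (apply ln_increasing; lra). lra.
Qed.

Lemma risk_M_0 : risk (0, 1) 0 = Fin 0.
Proof. rewrite risk_at_0. exact KL_0_0. Qed.

Lemma risk_M_1 : risk (0, 1) 1 = Fin 0.
Proof. rewrite risk_at_1. exact KL_1_1. Qed.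

Lemma M_dominates_boundary x y : InD (x, y) -> (x = 0 \/ x = 1 \/ y = 0 \/ y = 1) ->
  (x, y) <> (0, 1) -> dominates (0, 1) (x, y).
Proof.
  unfold InD. simpl. intros [Hx Hy] Hbd Hne.
  assert (H0 : x <> 0 -> er_lt (risk (0, 1) 0) (risk (x, y) 0)).
  { intro. rewrite risk_M_0, risk_at_0. apply KL_0_pos. simpl. lra. }
  assert (H1 : y <> 1 -> er_lt (risk (0, 1) 1) (risk (x, y) 1)).
  { intro. rewrite risk_M_1, risk_at_1. apply KL_1_pos. simpl. lra. }
  split.
  - intros t Ht.
    destruct (Req_dec t 0) as [-> | Ht0]; [| destruct (Req_dec t 1) as [-> | Ht1]].
    + destruct (Req_dec x 0) as [-> | Hx0]; [| apply H0; assumption].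
      rewrite risk_M_0, risk_at_0. simpl. rewrite KL_0_0. simpl. lra.
    + destruct (Req_dec y 1) as [-> | Hy1]; [| apply H1; assumption].
      rewrite risk_M_1, risk_at_1. simpl. rewrite KL_1_1. simpl. lra.
    + rewrite !risk_boundary by lra. exact I.
  - destruct (Req_dec x 0) as [-> | Hx0].
    + exists 1. split; [lra |]. apply H1. intros ->. apply Hne. reflexivity.
    + exists 0. split; [lra |]. apply H0. assumption.
Qed.

Lemma A_cls_InD d : A_cls d -> InD d.
Proof.
  destruct d as [x y]. unfold A_cls, C_lt, C_eq, M_cls, InD. simpl.
  intros [H | [H | H]]; [lra | lra |]. injection H as -> ->. lra.
Qed.

Lemma complete_A_cls : complete A_cls.
Proof.
  split; [exact A_cls_InD |].
  intros [x y] HD HnA. pose proof HD as [Hx Hy]. simpl in Hx, Hy.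
  unfold A_cls, C_lt, C_eq, M_cls in HnA. simpl in HnA.
  destruct (classic (0 < x < 1 /\ 0 < y < 1)) as [Hint | Hbd].
  - assert (Hyx : y < x).
    { destruct (Rtotal_order x y) as [? | [? | ?]]; [exfalso; apply HnA; lra .. | assumption]. }
    set (c := x / (1 + x - y)).
    assert (Hc : (1 + x - y) * c = x) by (unfold c; field; lra).
    assert (Hc0 : 0 < c < x) by nra.
    exists (c, c). split.
    + right; left. unfold C_eq. simpl. repeat split; lra.
    + apply diagonal_dominates; lra.
  - exists (0, 1). split; [right; right; reflexivity |].
    apply M_dominates_boundary; [assumption | lra | tauto].
Qed.

Lemma complete_contains_admissible C d : complete C -> admissible d -> C d.
Proof.
  intros [HCD HC] [HD Hno]. apply NNPP. intro HnC.
  destruct (HC d HD HnC) as [d' [Cd' Hdom]].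
  apply Hno. exists d'. split; [apply HCD |]; assumption.
Qed.

Lemma minimal_complete_of_admissible C : complete C ->
  (forall d, C d -> admissible d) -> minimal_complete C.
Proof.
  intros HC Hadm. split; [exact HC |].
  intros C' HC'C [d [Cd HnC'd]] HC'.
  apply HnC'd, complete_contains_admissible; [exact HC' | apply Hadm, Cd].
Qed.

Theorem theorem1 :
  minimal_complete A_cls /\ (forall d : decision, admissible d <-> A_cls d).
Proof.
  split.
  - exact (minimal_complete_of_admissible _ complete_A_cls A_cls_admissible).
  - intro d. split.
    + apply complete_contains_admissible, complete_A_cls.
    + apply A_cls_admissible.
Qed.
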